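(* Let $U^{init}\subseteq C$ be a set of (uncovered) clients and let $F^{init}$ be a minimum-cost spanning forest of the complete graph on $C\cup R$ in which every component contains exactly one vertex of $R\cup(C\setminus U^{init})$, regarded as the root of that component. Apply the Tree Pruning procedure described in the context to each tree of $F^{init}$; let $F'$ be the resulting forest, $U'$ the set of clients that remain uncovered, and $\mathcal T_1,\dots,\mathcal T_m$ all tours output. Then $\sum_{i=1}^m c(\mathcal T_i)\le 2.5\,(c(F^{init})-c(F')) + \frac{1}{\beta}\,(\ell(U^{init})-\ell(U'))$.
   Context: Setting: disjoint finite sets $C$ (clients) and $R$ (depots, nonempty) in a metric space with costs $c$; integer capacity $k\ge 3$; $c(v,R)=\min_{r\in R}c(v,r)>0$ for every client. For a client $v$, $\ell_v=\frac{2}{k}c(v,R)$, and $\ell(S)=\sum_{v\in S}\ell_v$. Constant $\beta = 0.5902302342$. Costs of trees, forests and tours are total edge costs (counting multiplicity). Tree Pruning procedure for a rooted tree $T$ with root $v_T$: maintain the set $U$ of uncovered clients (initially the non-root vertices of $T$). For a vertex $w$, $T_w$ is the subtree rooted at $w$ and $U(T_w)$ its uncovered vertices. Repeat the following iteration as long as it covers some client: let $u$ be any deepest vertex of the current $T$ with $|U(T_u)|>k$, or $u=v_T$ if none exists; let $u_1,u_2,\dots$ be the children of $u$. Grouping: put each $T_{u_i}$ in its own group, then while two groups can be merged so that the merged group has at most $k$ uncovered clients, merge them. For a group $G$, $c(G)$ is the total cost of its subtrees plus the edges joining their roots to $u$, and $U(G)$ the uncovered clients in its subtrees. Tour $\mathcal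 T(G)$: double all edges of the subtrees of $G$ and their edges to $u$, add two copies of a cheapest edge between a depot $r'$ and a client of $U(G)$, and shortcut the Eulerian tour to visit only $\{r'\}\cup U(G)$. For two distinct groups $G,G'$, let $A$ be the $k-|U(G)|$ clients of $U(G')$ with largest $\ell_v$; tour $\mathcal T(G,G')$: double all edges of subtrees of $G$ and $G'$ and their edges to $u$, add two copies of a cheapest edge between a depot $r'$ and a client of $U(G)\cup A$, shortcut to visit only $\{r'\}\cup U(G)\cup A$. In the iteration: if some group $G_i$ has $c(\mathcal T(G_i))\le 2.5\,c(G_i)+\frac1\beta\ell(U(G_i))$, output $\mathcal T(G_i)$, delete the subtrees of $G_i$ (with their edges to $u$) from $T$, and remove $U(G_i)$ from $U$; else if two distinct groups $G_i,G_j$ satisfy $c(\mathcal T(G_i,G_j))\le 2.5\,c(G_i)+\frac1\beta\ell(U(G_i)\cup A)$ (with $A$ defined from $G=G_i$, $G'=G_j$), output $\mathcal T(G_i,G_j)$, delete only the subtrees of $G_i$ from $T$, and remove $U(G_i)\cup A$ from $U$ (the vertices of $A$ stay in $T$ but are covered). *)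

From HB Require Import structures.
From mathcomp Require Import all_boot all_order all_algebra.
Set Implicit Arguments. Unset Strict Implicit. Unset Printing Implicit Defensive.
Import Order.TTheory GRing.Theory Num.Theory.
Local Open Scope ring_scope.

Section Metric.
Variables (V : finType) (K : realFieldType).

Definition metric (c : V -> V -> K) : Prop :=
  [/\ forall x, c x x = 0, forall x y, 0 <= c x y,
      forall x y, c x y = c y x &
      forall x y z, c x z <= c x y + c y z].

(* beta = 0.5902302342 *)
Definition beta : K :=
  (5902%:R * 10%:R ^+ 6 + 302%:R * 10%:R ^+ 3 + 342%:R) / 10%:R ^+ 10.

(* c(v,R) = min_{r in R} c(v,r)  (R is assumed nonempty) *)
Definition distR (c : V -> V -> K) (R : {set V}) (v : V) : K :=
  \big[Num.min/c v (odflt v [pick r in R])]_(r in R) c v r.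

Definition ell_v c R (k : nat) (v : V) : K := (2%:R / k%:R) * distR c R v.
Definition ell c R k (S : {set V}) : K := \sum_(v in S) ell_v c R k v.

Definition fcost (c : V -> V -> K) (par : V -> V) (S : {set V}) : K :=
  \sum_(x in S) c x (par x).

(* A spanning forest of the complete graph on W in which every component
   contains exactly one vertex of Rt (its root), given by the parent
   function par (edges {v, par v}, v in W \ Rt). *)
Definition rooted_forest (W Rt : {set V}) (par : V -> V) : Prop :=
  [/\ Rt \subset W,
      forall v, v \in W :\: Rt -> par v \in W &
      forall v, v \in W -> exists n, iter n par v \in Rt].

Definition min_rooted_forest c (W Rt : {set V}) (par : V -> V) : Prop :=
  rooted_forest W Rt par /\
  forall par', rooted_forest W Rt par' ->
    fcost c par (W :\: Rt) <= fcost c par' (W :\: Rt).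

(* tours: a tour is a cyclic sequence of vertices *)
Definition tour_cost (c : V -> V -> K) (t : seq V) : K :=
  \sum_(p <- zip t (rot 1 t)) c p.1 p.2.

Definition uedge (e : V * V) : {set V} := [set e.1; e.2].

Definition euler_walk (es : seq (V * V)) (w : seq V) : bool :=
  if w is x0 :: ws then
    (last x0 ws == x0) && perm_eq (map uedge (zip w ws)) (map uedge es)
  else false.

Definition shortcut_of (es : seq (V * V)) (S : {set V}) (t : seq V) : Prop :=
  exists w, euler_walk es w /\ t = undup [seq x <- w | x \in S].

End Metric.

Section Pruning.
Variables (V : finType) (K : realFieldType) (c : V -> V -> K)
  (R : {set V}) (k : nat) (par : V -> V) (Rt : {set V}).

Definition is_anc (x w : V) : bool :=
  [exists n : 'I_#|V|.+1,
     (iter n par x == w) && [forall m : 'I_n, iter m par x \notin Rt]].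

(* the current forest has vertex set Al (closed under par) *)
Definition subtree (Al : {set V}) (w : V) : {set V} := [set x in Al | is_anc x w].
Definition depth (x : V) : nat := #|[set y | is_anc x y]|.
Definition children (Al : {set V}) (u : V) : {set V} :=
  [set x in Al | (x \notin Rt) && (par x == u)].
(* vertices of the subtrees of a group G (a set of children of u) *)
Definition verts (Al G : {set V}) : {set V} := \bigcup_(y in G) subtree Al y.
(* c(G): edges of the subtrees of G plus their edges to u *)
Definition costG (Al G : {set V}) : K := fcost c par (verts Al G).

Definition big (Al U : {set V}) (w : V) : bool := (k < #|U :&: subtree Al w|)%N.

Definition choose_u (rho : V) (Al U : {set V}) (u : V) : Prop :=
  (u \in subtree Al rho /\ big Al U u /\
     forall w, w \in subtree Al rho -> big Al U w -> (depth w <= depth u)%N)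
  \/ (u = rho /\ forall w, w \in subtree Al rho -> ~~ big Al U w).

Definition merge_step (Al U : {set V}) (P P' : {set {set V}}) : Prop :=
  exists G1 G2, [/\ G1 \in P, G2 \in P, G1 != G2,
    (#|U :&: verts Al (G1 :|: G2)| <= k)%N &
    P' = (P :\ G1 :\ G2) :|: [set G1 :|: G2]].

Inductive merge_reach (Al U : {set V}) : {set {set V}} -> {set {set V}} -> Prop :=
| MR_refl P : merge_reach Al U P P
| MR_step P P1 P2 : merge_step Al U P P1 -> merge_reach Al U P1 P2 ->
                    merge_reach Al U P P2.

Definition grouping (Al U : {set V}) (u : V) (P : {set {set V}}) : Prop :=
  merge_reach Al U [set [set x] | x in children Al u] P /\
  forall G1 G2, G1 \in P -> G2 \in P -> G1 != G2 ->
    (k < #|U :&: verts Al (G1 :|: G2)|)%N.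

Definition cheapest (S : {set V}) (r' y : V) : Prop :=
  [/\ r' \in R, y \in S & forall r z, r \in R -> z \in S -> c r' y <= c r z].

Definition dbl_edges (X : {set V}) (r' y : V) : seq (V * V) :=
  let b := [seq (x, par x) | x <- enum X] ++ [:: (r', y)] in b ++ b.

Definition UG (Al U G : {set V}) : {set V} := U :&: verts Al G.

Definition tour_single (Al U G : {set V}) (t : seq V) : Prop :=
  exists r' y, cheapest (UG Al U G) r' y /\
    shortcut_of (dbl_edges (verts Al G) r' y) (r' |: UG Al U G) t.

Definition top_ell (S A : {set V}) (n : nat) : Prop :=
  [/\ A \subset S, #|A| = n &
      forall a b, a \in A -> b \in S :\: A -> ell_v c R k b <= ell_v c R k a].

Definition tour_pair (Al U G G' A : {set V}) (t : seq V) : Prop :=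
  exists r' y, cheapest (UG Al U G :|: A) r' y /\
    shortcut_of (dbl_edges (verts Al G :|: verts Al G') r' y)
                (r' |: (UG Al U G :|: A)) t.

Definition condG (Al U G : {set V}) (t : seq V) : Prop :=
  tour_cost c t <= (5%:R / 2%:R) * costG Al G + ell c R k (UG Al U G) / beta K.

Definition condGG (Al U G A : {set V}) (t : seq V) : Prop :=
  tour_cost c t <= (5%:R / 2%:R) * costG Al G
                   + ell c R k (UG Al U G :|: A) / beta K.

Definition state := ({set V} * {set V})%type.  (* (vertices of F, U) *)

(* the choices made in one iteration on the tree rooted at rho:
   u, the grouping P, the tours T(G), the sets A and the tours T(G,G') *)
Definition iter_choice (rho : V) (Al U : {set V}) (u : V) (P : {set {set V}})
  (tG : {set V} -> seq V) (AG : {set V} -> {set V} -> {set V})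
  (tGG : {set V} -> {set V} -> seq V) : Prop :=
  [/\ choose_u rho Al U u, grouping Al U u P,
      forall G, G \in P -> UG Al U G != set0 -> tour_single Al U G (tG G) &
      forall G G', G \in P -> G' \in P -> G != G' ->
        top_ell (UG Al U G') (AG G G') (k - #|UG Al U G|)
        /\ tour_pair Al U G G' (AG G G') (tGG G G')].

Definition no_single (Al U : {set V}) (P : {set {set V}}) (tG : {set V} -> seq V) : Prop :=
  forall G, G \in P -> UG Al U G != set0 -> ~ condG Al U G (tG G).
Definition no_pair (Al U : {set V}) (P : {set {set V}}) (AG : {set V} -> {set V} -> {set V})
  (tGG : {set V} -> {set V} -> seq V) : Prop :=
  forall G G', G \in P -> G' \in P -> G != G' ->
    ~ condGG Al U G (AG G G') (tGG G G').

Definition iter_cover (rho : V) (s : state) (out : seq (seq V)) (s' : state)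
  : Prop :=
  let: (Al, U) := s in
  exists u P tG AG tGG, iter_choice rho Al U u P tG AG tGG /\
  ((exists G, [/\ G \in P, UG Al U G != set0, condG Al U G (tG G),
                 out = [:: tG G] &
                 s' = (Al :\: verts Al G, U :\: UG Al U G)])
   \/
   (no_single Al U P tG /\
    exists G G', [/\ G \in P, G' \in P, G != G',
                    condGG Al U G (AG G G') (tGG G G') &
                    out = [:: tGG G G'] /\
                    s' = (Al :\: verts Al G, U :\: (UG Al U G :|: AG G G'))])).

Definition iter_stop (rho : V) (s : state) : Prop :=
  let: (Al, U) := s in
  exists u P tG AG tGG, iter_choice rho Al U u P tG AG tGG /\
    no_single Al U P tG /\ no_pair Al U P AG tGG.

Inductive tree_run (rho : V) : state -> seq (seq V) -> state -> Prop :=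
| TR_stop s : iter_stop rho s -> tree_run rho s [::] s
| TR_step s out s1 outs s2 : iter_cover rho s out s1 ->
    tree_run rho s1 outs s2 -> tree_run rho s (out ++ outs) s2.

Inductive forest_run : seq V -> state -> seq (seq V) -> state -> Prop :=
| FR_nil s : forest_run [::] s [::] s
| FR_cons rho rs s s1 s2 o1 o2 : tree_run rho s o1 s1 ->
    forest_run rs s1 o2 s2 -> forest_run (rho :: rs) s (o1 ++ o2) s2.

End Pruning.

From HB Require Import structures.
From mathcomp Require Import all_boot all_order all_algebra.
From mathcomp Require Import ring.
Set Implicit Arguments. Unset Strict Implicit. Unset Printing Implicit Defensive.
Import Order.TTheory GRing.Theory Num.Theory.
Local Open Scope ring_scope.

(* Every tour output by an iteration costs at most the drop it causes in the
   potential  5/2 c(F) + ell(U) / beta:  its acceptance test bounds its cost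
   by 5/2 c(G) + ell(X) / beta, where G is the group whose subtrees are
   deleted from F and X is the set of clients that become covered (in the
   pair case X = U(G) u A, and A stays in F, so only c(G) leaves c(F)).
   Summing over all iterations of all trees telescopes. *)

Lemma big_setD_sub (T : finType) (M : nmodType) (f : T -> M) (A X : {set T}) :
  X \subset A -> \sum_(x in A) f x = \sum_(x in X) f x + \sum_(x in A :\: X) f x.
Proof. by move=> sXA; rewrite (big_setID X) (setIidPr sXA). Qed.

Lemma le_telescope (M : numDomainType) (a b p0 p1 p2 : M) :
  a <= p0 - p1 -> b <= p1 - p2 -> a + b <= p0 - p2.
Proof.
move=> ha hb; have -> : p0 - p2 = (p0 - p1) + (p1 - p2) by rewrite addrA subrK.
exact: lerD.
Qed.

Section TreePruningPotential.
Variables (V : finType) (K : realFieldType) (c : V -> V -> K)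
  (R : {set V}) (k : nat) (par : V -> V) (Rt : {set V}).

Definition potential (s : state V) : K :=
  (5%:R / 2%:R) * fcost c par (s.1 :\: Rt) + ell c R k s.2 / beta K.

Lemma verts_children_sub (Al G : {set V}) (u : V) :
  G \subset children par Rt Al u -> verts par Rt Al G \subset Al :\: Rt.
Proof.
move=> sGch; apply/subsetP => x /bigcupP [y yG].
rewrite inE => /andP [xAl /existsP [[[|n] ltn] /andP [/eqP xy /forallP notR]]].
- have := subsetP sGch y yG; rewrite inE => /and3P [_ yRt _].
  by rewrite inE xAl andbT; move: xy => /= ->.
- by rewrite inE xAl andbT; exact: (notR (Ordinal (ltn0Sn n))).
Qed.

Lemma merge_reach_sub_children (Al U : {set V}) (u : V) (P P' : {set {set V}}) :
  merge_reach k par Rt Al U P P' ->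
  {in P, forall G : {set V}, G \subset children par Rt Al u} ->
  {in P', forall G : {set V}, G \subset children par Rt Al u}.
Proof.
elim=> // P0 P1 P2 [G1 [G2 [G1P G2P _ _ ->]]] _ IH sP0; apply: IH => G.
rewrite !inE => /orP [/and3P [_ _ GP0] | /eqP ->]; first exact: sP0.
by rewrite subUset !sP0.
Qed.

Lemma grouping_sub_children (Al U : {set V}) (u : V) (P : {set {set V}}) :
  grouping k par Rt Al U u P ->
  {in P, forall G : {set V}, G \subset children par Rt Al u}.
Proof.
case=> reachP _; apply: (merge_reach_sub_children reachP) => _ /imsetP [x xch ->].
by rewrite sub1set.
Qed.

Lemma potential_remove (Al U G X : {set V}) (u : V) :
  G \subset children par Rt Al u -> X \subset U ->
  potential (Al, U) - potential (Al :\: verts par Rt Al G, U :\: X) =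
  (5%:R / 2%:R) * costG c par Rt Al G + ell c R k X / beta K.
Proof.
move=> sGch sXU; rewrite /potential /costG /fcost /ell /=.
have -> : (Al :\: verts par Rt Al G) :\: Rt = (Al :\: Rt) :\: verts par Rt Al G.
  by rewrite setDDl setUC -setDDl.
rewrite (big_setD_sub _ (verts_children_sub sGch)) (big_setD_sub _ sXU).
rewrite !mulrDr !mulrDl; ring.
Qed.

Lemma iter_cover_potential (rho : V) (s s' : state V) (out : seq (seq V)) :
  iter_cover c R k par Rt rho s out s' ->
  \sum_(t <- out) tour_cost c t <= potential s - potential s'.
Proof.
case: s => Al U [u [P [tG [AG [tGG [[_ groupP _ pairP] covered]]]]]].
have sPch := grouping_sub_children groupP.
case: covered => [[G [GP _ accepted -> ->]] | [_ [G [G' [GP G'P neqGG' accepted [-> ->]]]]]].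
  by rewrite big_seq1 (potential_remove (sPch G GP)) // subsetIl.
have [[sAUG' _ _] _] := pairP G G' GP G'P neqGG'.
rewrite big_seq1 (potential_remove (sPch G GP)) // subUset subsetIl /=.
exact: subset_trans sAUG' (subsetIl _ _).
Qed.

Lemma tree_run_potential (rho : V) (s s' : state V) (outs : seq (seq V)) :
  tree_run c R k par Rt rho s outs s' ->
  \sum_(t <- outs) tour_cost c t <= potential s - potential s'.
Proof.
elim=> [s0 _ | s0 out s1 outs0 s2 step _ IH]; first by rewrite big_nil subrr.
by rewrite big_cat /=; exact: le_telescope (iter_cover_potential step) IH.
Qed.

Lemma forest_run_potential (rs : seq V) (s s' : state V) (outs : seq (seq V)) :
  forest_run c R k par Rt rs s outs s' ->
  \sum_(t <- outs) tour_cost c t <= potential s - potential s'.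
Proof.
elim=> [s0 | rho rs0 s0 s1 s2 o1 o2 run _ IH]; first by rewrite big_nil subrr.
by rewrite big_cat /=; exact: le_telescope (tree_run_potential run) IH.
Qed.

End TreePruningPotential.

Theorem corollary1 (V : finType) (K : realFieldType) (c : V -> V -> K)
  (C R : {set V}) (k : nat) (Uinit : {set V}) (par : V -> V)
  (rs : seq V) (ts : seq (seq V)) (Al' U' : {set V}) :
  metric c -> [disjoint C & R] -> R != set0 -> (3 <= k)%N ->
  (forall v, v \in C -> 0 < distR c R v) ->
  Uinit \subset C ->
  min_rooted_forest c (C :|: R) (R :|: (C :\: Uinit)) par ->
  perm_eq rs (enum (R :|: (C :\: Uinit))) ->
  forest_run c R k par (R :|: (C :\: Uinit)) rs (C :|: R, Uinit) ts (Al', U') ->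
  \sum_(t <- ts) tour_cost c t <=
    (5%:R / 2%:R) * (fcost c par ((C :|: R) :\: (R :|: (C :\: Uinit)))
                     - fcost c par (Al' :\: (R :|: (C :\: Uinit))))
    + (ell c R k Uinit - ell c R k U') / beta K.
Proof.
(* The bound uses only the acceptance tests, not the metric or the forest. *)
move=> _ _ _ _ _ _ _ _ run.
apply: (le_trans (forest_run_potential run)).
rewrite /potential /= le_eqVlt; apply/orP; left; apply/eqP; ring.
Qed.
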